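(* Let $|q|<1$, let $n\ge 0$ be an integer, and let $t$ be a complex number with $|t|<1$ and $|xt|<1$. Then $$\mathbb{E}(D_{xy})\left\{\frac{(yt;q)_\infty}{(xt;q)_\infty}\,\frac{P_n(x,y)}{(yt;q)_n}\right\}=\frac{(yt;q)_\infty}{(t,xt;q)_\infty}\sum_{k=0}^n {n\brack k}\frac{(y,xt;q)_k}{(yt;q)_k}\,x^{n-k}.$$
   Context: Throughout $|q|<1$. $(a;q)_n=\prod_{k=0}^{n-1}(1-aq^k)$, $(a;q)_\infty=\prod_{k\ge0}(1-aq^k)$, $(a_1,\dots,a_m;q)_n=\prod_i(a_i;q)_n$ (also for $n=\infty$), and ${n\brack k}=\frac{(q;q)_n}{(q;q)_k(q;q)_{n-k}}$. $P_n(x,y)=(x-y)(x-qy)\cdots(x-q^{n-1}y)$ with $P_0=1$. The homogeneous $q$-difference operator acting on functions of $(x,y)$ is $D_{xy}f(x,y)=\frac{f(x,q^{-1}y)-f(qx,y)}{x-q^{-1}y}$, and the homogeneous $q$-shift operator is $\mathbb{E}(D_{xy})=\sum_{k=0}^\infty\frac{D_{xy}^k}{(q;q)_k}$. *)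

From Stdlib Require Import Reals.
From Coquelicot Require Import Coquelicot.
Open Scope C_scope.

Fixpoint qpoch (a q : C) (n : nat) : C :=
  match n with
  | O => 1
  | S m => qpoch a q m * (1 - a * pow_n q m)
  end.

(* infinite q-shifted factorial (a;q)_oo, the limit of (a;q)_n as n -> oo,
   taken componentwise (real and imaginary parts); for |q| < 1 the limit exists *)
Definition qpinf (a q : C) : C :=
  (real (Lim_seq (fun n => Re (qpoch a q n))),
   real (Lim_seq (fun n => Im (qpoch a q n)))).

Definition qbinom (q : C) (n k : nat) : C :=
  qpoch q q n / (qpoch q q k * qpoch q q (n - k)).

Fixpoint Pn (q x y : C) (n : nat) : C :=
  match n with
  | O => 1
  | S m => Pn q x y m * (x - pow_n q m * y)
  end.

Definition Dxy (q : C) (f : C -> C -> C) : C -> C -> C :=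
  fun x y => (f x (/ q * y) - f (q * x) y) / (x - / q * y).

Definition Dxy_pow (q : C) (k : nat) (f : C -> C -> C) : C -> C -> C :=
  Nat.iter k (Dxy q) f.

(* Write F_n(t) for the function in braces and R_n(t) for the right-hand side.
   For n = 0, F_0(t) = (vt;q)_oo/(ut;q)_oo is an eigenfunction of D_xy with
   eigenvalue t, so E(D_xy) F_0(t) = F_0(t) sum_k t^k/(q;q)_k = F_0(t)/(t;q)_oo
   by Euler's identity, which is R_0(t).  For t <> 0 the shift relations of
   (a;q)_oo give F_{n+1}(t) = (F_n(t) - F_n(tq))/t, and the q-Pascal rule gives
   the same recursion for R_n(t); since E(D_xy) is linear, induction on n (for
   all t at once) proves the claim.  For t = 0, F_n(0) = P_n, which D_xy lowers
   to a multiple of P_{n-1}; the series is finite and the claim becomes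
   sum_k [n k] P_{n-k}(x,y) = sum_k [n k] (y;q)_k x^{n-k}, proved by induction
   on n through the substitution x -> x/q.  Iterating D_xy from (x,y) only
   evaluates at points (q^a x, q^-b y), where the hypotheses keep every
   denominator nonzero. *)

From Stdlib Require Import Reals Lra Lia.
From Coquelicot Require Import Coquelicot.
Open Scope C_scope.

(** * Finite q-identities *)

Lemma pow_n_S (z : C) m : (pow_n z (S m) : C) = z * pow_n z m.
Proof. reflexivity. Qed.

Lemma pow_n_O (z : C) : (pow_n z 0 : C) = 1.
Proof. reflexivity. Qed.

Lemma pow_n_add (z : C) a b : (pow_n z (a + b) : C) = pow_n z a * pow_n z b.
Proof. exact (pow_n_plus z a b). Qed.

Lemma pow_n_mult (a b : C) m : (pow_n (a * b) m : C) = pow_n a m * pow_n b m.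
Proof. induction m; rewrite ?pow_n_O, ?pow_n_S, ?IHm; ring. Qed.

Lemma Cmod_pow_n (z : C) m : Cmod (pow_n z m) = (Cmod z ^ m)%R.
Proof. induction m; [apply Cmod_1 | now rewrite pow_n_S, Cmod_mult, IHm]. Qed.

Lemma pow_n_neq_0 (z : C) m : z <> 0 -> (pow_n z m : C) <> 0.
Proof.
  intros hz. apply Cmod_gt_0. rewrite Cmod_pow_n. now apply pow_lt, Cmod_gt_0.
Qed.

Lemma Cmod_pow_n_le_1 (q : C) m : (Cmod q < 1)%R -> (Cmod (pow_n q m) <= 1)%R.
Proof.
  intros hq. rewrite Cmod_pow_n, <- (pow1 m). apply pow_incr. split; [apply Cmod_ge_0 | lra].
Qed.

Lemma Cmod_mult_pow_n_lt_1 (a q : C) m :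
  (Cmod q < 1)%R -> (Cmod a < 1)%R -> (Cmod (a * pow_n q m) < 1)%R.
Proof.
  intros hq ha. rewrite Cmod_mult.
  pose proof (Cmod_pow_n_le_1 q m hq). pose proof (Cmod_ge_0 (pow_n q m)).
  pose proof (Cmod_ge_0 a). nra.
Qed.

Lemma Cmod_mult_lt_1 (a b : C) : (Cmod a < 1)%R -> (Cmod b < 1)%R -> (Cmod (a * b) < 1)%R.
Proof.
  intros ha hb. rewrite Cmod_mult. pose proof (Cmod_ge_0 a). pose proof (Cmod_ge_0 b). nra.
Qed.

Lemma one_minus_neq_0 (w : C) : (Cmod w < 1)%R -> 1 - w <> 0.
Proof.
  intros hw e. replace w with (RtoC 1) in hw by (apply Ceq_minus; now rewrite <- e).
  rewrite Cmod_1 in hw. lra.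
Qed.

Lemma qpoch_O a q : qpoch a q 0 = 1.
Proof. reflexivity. Qed.

Lemma qpoch_S a q m : qpoch a q (S m) = qpoch a q m * (1 - a * pow_n q m).
Proof. reflexivity. Qed.

Lemma qpoch_shift a q m : qpoch a q (S m) = (1 - a) * qpoch (a * q) q m.
Proof.
  revert a; induction m as [|m IH]; intros a.
  - rewrite qpoch_S, !qpoch_O, pow_n_O. ring.
  - rewrite qpoch_S, IH, qpoch_S, pow_n_S. ring.
Qed.

Lemma qpoch_mult_q a q k : 1 - a <> 0 ->
  qpoch (a * q) q k = qpoch a q k * (1 - a * pow_n q k) / (1 - a).
Proof.
  intros ha. rewrite <- qpoch_S, qpoch_shift. field. exact ha.
Qed.

Lemma qpoch_0l q m : qpoch 0 q m = 1.
Proof. induction m as [|m IH]; [reflexivity | rewrite qpoch_S, IH; ring]. Qed.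

Lemma qpoch_neq_0 a q m : (Cmod q < 1)%R -> (Cmod a < 1)%R -> qpoch a q m <> 0.
Proof.
  intros hq ha. induction m as [|m IH].
  - rewrite qpoch_O. intros e; injection e; lra.
  - rewrite qpoch_S. apply Cmult_neq_0; [exact IH|].
    now apply one_minus_neq_0, Cmod_mult_pow_n_lt_1.
Qed.

Lemma qpoch_factors_neq_0 a q n k : qpoch a q (S n) <> 0 -> (k <= n)%nat ->
  qpoch a q k <> 0 /\ 1 - a * pow_n q k <> 0.
Proof.
  intros h hk. induction hk as [|n hk IH].
  - rewrite qpoch_S in h. split; intros e; apply h; rewrite e; ring.
  - apply IH. rewrite qpoch_S in h. intros e; apply h; rewrite e; ring.
Qed.

Lemma Pn_O q u v : Pn q u v 0 = 1.
Proof. reflexivity. Qed.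

Lemma Pn_S q u v m : Pn q u v (S m) = Pn q u v m * (u - pow_n q m * v).
Proof. reflexivity. Qed.

Lemma Pn_shift q u v m : Pn q u v (S m) = (u - v) * Pn q u (q * v) m.
Proof.
  revert v; induction m as [|m IH]; intros v.
  - rewrite Pn_S, !Pn_O, pow_n_O. ring.
  - rewrite Pn_S, IH, Pn_S, pow_n_S. ring.
Qed.

Lemma Pn_scale q c u v m : Pn q (c * u) (c * v) m = pow_n c m * Pn q u v m.
Proof. induction m; rewrite ?Pn_O, ?Pn_S, ?pow_n_O, ?pow_n_S, ?IHm; ring. Qed.

(* [sum_n] is stated over an abstract monoid; [Csum] fixes the carrier
   syntactically to [C], which [ring] and [field] need. *)
Definition Csum (a : nat -> C) (n : nat) : C := sum_n a n.

Lemma Csum_O (a : nat -> C) : Csum a 0 = a 0%nat.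
Proof. exact (sum_O a). Qed.

Lemma Csum_S (a : nat -> C) n : Csum a (S n) = Csum a n + a (S n).
Proof. exact (sum_Sn a n). Qed.

Lemma Csum_shift (a : nat -> C) n : Csum a (S n) = a 0%nat + Csum (fun k => a (S k)) n.
Proof.
  induction n as [|n IH]; rewrite Csum_S.
  - now rewrite !Csum_O.
  - rewrite IH, Csum_S. ring.
Qed.

Lemma Csum_ext_loc (a b : nat -> C) n :
  (forall k, (k <= n)%nat -> a k = b k) -> Csum a n = Csum b n.
Proof. exact (sum_n_ext_loc a b n). Qed.

Lemma Csum_plus (a b : nat -> C) n : Csum (fun k => a k + b k) n = Csum a n + Csum b n.
Proof. exact (sum_n_plus a b n). Qed.

Lemma Csum_scal (c : C) (a : nat -> C) n : Csum (fun k => c * a k) n = c * Csum a n.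
Proof. exact (sum_n_scal_l c a n). Qed.

Lemma Csum_minus (a b : nat -> C) n : Csum (fun k => a k - b k) n = Csum a n - Csum b n.
Proof. induction n; rewrite ?Csum_O, ?Csum_S, ?IHn; ring. Qed.

Lemma Csum_telescope (u : nat -> C) m : Csum (fun k => u (S k) - u k) m = u (S m) - u 0%nat.
Proof. induction m; rewrite ?Csum_O, ?Csum_S, ?IHm; ring. Qed.

Lemma qpoch_qq_neq_0 q k : (Cmod q < 1)%R -> qpoch q q k <> 0.
Proof. intros hq. now apply qpoch_neq_0. Qed.

Lemma one_minus_pow_n_S_neq_0 q k : (Cmod q < 1)%R -> 1 - q * pow_n q k <> 0.
Proof. intros hq. now apply one_minus_neq_0, Cmod_mult_pow_n_lt_1. Qed.

Lemma qbinom_n0 q n : (Cmod q < 1)%R -> qbinom q n 0 = 1.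
Proof.
  intros hq. unfold qbinom. rewrite Nat.sub_0_r, qpoch_O.
  field. now apply qpoch_qq_neq_0.
Qed.

Lemma qbinom_nn q n : (Cmod q < 1)%R -> qbinom q n n = 1.
Proof.
  intros hq. unfold qbinom. rewrite Nat.sub_diag, qpoch_O.
  field. now apply qpoch_qq_neq_0.
Qed.

Lemma qbinom_pascal q n k : (Cmod q < 1)%R -> (k < n)%nat ->
  qbinom q (S n) (S k) = qbinom q n k + pow_n q (S k) * qbinom q n (S k).
Proof.
  intros hq hk. destruct (Nat.le_exists_sub (S k) n hk) as [j [-> _]].
  unfold qbinom.
  replace (S (j + S k) - S k)%nat with (S j) by lia.
  replace (j + S k - k)%nat with (S j) by lia.
  replace (j + S k - S k)%nat with j by lia.
  rewrite !qpoch_S, pow_n_add, !pow_n_S.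
  pose proof (qpoch_qq_neq_0 q k hq). pose proof (qpoch_qq_neq_0 q j hq).
  pose proof (qpoch_qq_neq_0 q (j + S k) hq).
  pose proof (one_minus_pow_n_S_neq_0 q k hq). pose proof (one_minus_pow_n_S_neq_0 q j hq).
  field. repeat split; assumption.
Qed.

Lemma qbinom_pascal_sum q n (A : nat -> C) : (Cmod q < 1)%R ->
  Csum (fun k => qbinom q (S n) k * A k) (S n)
  = Csum (fun k => qbinom q n k * (A (S k) + pow_n q k * A k)) n.
Proof.
  intros hq.
  (* [qbinom q n k] is junk for [k > n]; [B] extends it by zero. *)
  set (B n k := if (k <=? n)%nat then qbinom q n k else 0).
  assert (B_le : forall n k, (k <= n)%nat -> B n k = qbinom q n k).
  { intros m k hk. unfold B. now rewrite (proj2 (Nat.leb_le k m) hk). }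
  assert (B_gt : B n (S n) = 0).
  { unfold B. now rewrite (proj2 (Nat.leb_gt (S n) n) (Nat.lt_succ_diag_r n)). }
  assert (B_pascal : forall k, B (S n) (S k) = B n k + pow_n q (S k) * B n (S k)).
  { intros k. destruct (Compare_dec.lt_eq_lt_dec k n) as [[hk|<-]|hk].
    - rewrite !B_le by lia. now apply qbinom_pascal.
    - rewrite B_gt, !B_le, !qbinom_nn by (auto; lia). ring.
    - unfold B. rewrite !(proj2 (Nat.leb_gt _ _)) by lia. ring. }
  set (g k := pow_n q k * B n k * A k).
  transitivity (Csum (fun k => B (S n) k * A k) (S n)).
  { apply Csum_ext_loc. intros k hk. now rewrite B_le. }
  transitivity (Csum (fun k => B n k * A (S k)) n + Csum g n).
  2:{ rewrite <- Csum_plus. apply Csum_ext_loc. intros k hk. unfold g.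
      rewrite B_le by exact hk. ring. }
  assert (g_shift : Csum (fun k => g (S k)) n = Csum g n - g 0%nat).
  { assert (g_last : g (S n) = 0) by (unfold g; rewrite B_gt; ring).
    assert (e := Csum_shift g n). rewrite Csum_S, g_last in e.
    transitivity (g 0%nat + Csum (fun k => g (S k)) n - g 0%nat); [ring | rewrite <- e; ring]. }
  rewrite Csum_shift, B_le, qbinom_n0 by (auto; lia).
  rewrite (Csum_ext_loc _ (fun k => B n k * A (S k) + g (S k)))
    by (intros k _; unfold g; rewrite B_pascal; ring).
  rewrite Csum_plus, g_shift. unfold g. rewrite pow_n_O, B_le, qbinom_n0 by (auto; lia). ring.
Qed.

Definition rhs_sum q x y t n : C :=
  Csum (fun k => qbinom q n k * (qpoch y q k * qpoch (x * t) q k) / qpoch (y * t) q k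
                 * pow_n x (n - k)) n.

Lemma rhs_sum_S q x y t n : (Cmod q < 1)%R -> 1 - x * t <> 0 -> qpoch (y * t) q (S n) <> 0 ->
  t * rhs_sum q x y t (S n)
  = rhs_sum q x y t n - (1 - t) * (1 - x * t) / (1 - y * t) * rhs_sum q x y (t * q) n.
Proof.
  intros hq hxt hyt.
  destruct (qpoch_factors_neq_0 _ _ _ 0 hyt (Nat.le_0_l n)) as [_ hyt1].
  rewrite pow_n_O, Cmult_1_r in hyt1.
  set (A k := qpoch y q k * qpoch (x * t) q k / qpoch (y * t) q k * pow_n x (S n - k)).
  unfold rhs_sum.
  rewrite (Csum_ext_loc _ (fun k => qbinom q (S n) k * A k))
    by (intros k _; unfold A, Cdiv; ring).
  rewrite qbinom_pascal_sum, <- !Csum_scal, <- Csum_minus by exact hq.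
  apply Csum_ext_loc. intros k hk. unfold A.
  replace (S n - S k)%nat with (n - k)%nat by lia.
  replace (S n - k)%nat with (S (n - k)) by lia.
  destruct (qpoch_factors_neq_0 _ _ _ k hyt hk) as [hyk hyk1].
  replace (x * (t * q)) with (x * t * q) by ring.
  replace (y * (t * q)) with (y * t * q) by ring.
  rewrite !qpoch_mult_q, !qpoch_S, pow_n_S by assumption.
  field. repeat split; assumption.
Qed.

Definition qbinom_Pn_sum q x y n : C :=
  Csum (fun k => qbinom q n k * Pn q x y (n - k)) n.

Definition qbinom_qpoch_sum q x y n : C :=
  Csum (fun k => qbinom q n k * qpoch y q k * pow_n x (n - k)) n.

Lemma pow_n_split (z : C) n k : (k <= n)%nat -> pow_n z k * pow_n z (n - k) = pow_n z n.
Proof. intros hk. rewrite <- pow_n_add. f_equal. lia. Qed.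

Lemma qbinom_Pn_sum_S q x y n : (Cmod q < 1)%R -> q <> 0 ->
  qbinom_Pn_sum q x y (S n)
  = qbinom_Pn_sum q x y n + (x - y) * pow_n q n * qbinom_Pn_sum q (x / q) y n.
Proof.
  intros hq hq0. unfold qbinom_Pn_sum.
  rewrite qbinom_pascal_sum, <- Csum_scal, <- Csum_plus by exact hq.
  apply Csum_ext_loc. intros k hk.
  replace (S n - S k)%nat with (n - k)%nat by lia.
  replace (S n - k)%nat with (S (n - k)) by lia.
  rewrite Pn_shift.
  replace (Pn q x (q * y) (n - k)) with (Pn q (q * (x / q)) (q * y) (n - k))
    by (f_equal; field; exact hq0).
  rewrite Pn_scale, <- (pow_n_split q n k hk). ring.
Qed.

Lemma qbinom_qpoch_sum_S q x y n : (Cmod q < 1)%R -> q <> 0 ->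
  qbinom_qpoch_sum q x y (S n)
  = qbinom_qpoch_sum q x y n + (x - y) * pow_n q n * qbinom_qpoch_sum q (x / q) y n.
Proof.
  intros hq hq0. unfold qbinom_qpoch_sum.
  rewrite (Csum_ext_loc _ (fun k => qbinom q (S n) k * (qpoch y q k * pow_n x (S n - k))))
    by (intros k _; ring).
  rewrite qbinom_pascal_sum, <- Csum_scal, <- Csum_plus by exact hq.
  apply Csum_ext_loc. intros k hk.
  replace (S n - S k)%nat with (n - k)%nat by lia.
  replace (S n - k)%nat with (S (n - k)) by lia.
  replace x with (x / q * q) at 1 2 3 by (field; exact hq0).
  rewrite qpoch_S, pow_n_S, pow_n_mult, <- (pow_n_split q n k hk).
  field. exact hq0.
Qed.

Lemma qbinom_Pn_sum_eq q x y n : (Cmod q < 1)%R -> q <> 0 ->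
  qbinom_Pn_sum q x y n = qbinom_qpoch_sum q x y n.
Proof.
  intros hq hq0. revert x; induction n as [|n IH]; intros x.
  - unfold qbinom_Pn_sum, qbinom_qpoch_sum. rewrite !Csum_O, Pn_O, qpoch_O, pow_n_O. ring.
  - now rewrite qbinom_Pn_sum_S, qbinom_qpoch_sum_S, !IH.
Qed.

(** * Limits of complex sequences and infinite products *)

Notation "u --> L" := (filterlim u eventually (locally (L : C_NormedModule))) (at level 70).

Lemma Cmod_one_minus_le (w : C) : (Cmod (1 - w) <= 1 + Cmod w)%R.
Proof. eapply Rle_trans; [apply Cmod_triangle | rewrite Cmod_1, Cmod_opp; lra]. Qed.

Lemma Cmod_sub_comm (a b : C) : Cmod (a - b) = Cmod (b - a).
Proof. rewrite <- Cmod_opp. f_equal. ring. Qed.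

Lemma Rabs_Cmod_sub_le (a b : C) : (Rabs (Cmod a - Cmod b) <= Cmod (a - b))%R.
Proof.
  apply Rabs_le. split.
  - pose proof (Cmod_triangle (b - a) a). replace (b - a + a) with b in H by ring.
    rewrite Cmod_sub_comm in H. lra.
  - pose proof (Cmod_triangle (a - b) b). replace (a - b + b) with a in H by ring. lra.
Qed.

Lemma im_le_Cmod (c : C) : (Rabs (Im c) <= Cmod c)%R.
Proof.
  eapply Rle_trans; [apply Rmax_r | apply Rmax_Cmod].
Qed.

Lemma filterlim_S {U : Type} (u : nat -> U) (F : (U -> Prop) -> Prop) :
  filterlim (fun n => u (S n)) eventually F -> filterlim u eventually F.
Proof.
  intros h P hP. destruct (h P hP) as [N hN].
  exists (S N). intros [|n] hn; [lia | apply hN; lia].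
Qed.

Lemma is_lim_seq_of_Rabs_le (a e : nat -> R) (l : R) :
  (forall n, (Rabs (a n - l) <= e n)%R) -> is_lim_seq e 0%R -> is_lim_seq a l.
Proof.
  intros he he0. apply is_lim_seq_spec in he0. apply is_lim_seq_spec. intros eps.
  destruct (he0 eps) as [N hN]. exists N. intros n hn. specialize (hN n hn).
  rewrite Rminus_0_r in hN. eapply Rle_lt_trans; [apply he|].
  eapply Rle_lt_trans; [apply Rle_abs | exact hN].
Qed.

Lemma Clim_of_Cmod_le (u : nat -> C) L (e : nat -> R) :
  (forall n, (Cmod (u n - L) <= e n)%R) -> is_lim_seq e 0%R -> u --> L.
Proof.
  intros he he0. apply (proj2 (filterlim_locally_ball_norm _ _)). intros eps.
  apply is_lim_seq_spec in he0. destruct (he0 eps) as [N hN].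
  exists N. intros n hn. specialize (hN n hn). rewrite Rminus_0_r in hN.
  change (Cmod (u n - L) < eps)%R. eapply Rle_lt_trans; [apply he|].
  eapply Rle_lt_trans; [apply Rle_abs | exact hN].
Qed.

Lemma Cmod_of_Clim (u : nat -> C) L : u --> L -> is_lim_seq (fun n => Cmod (u n - L)) 0%R.
Proof.
  intros h. apply is_lim_seq_spec. intros eps.
  destruct (proj1 (filterlim_locally_ball_norm _ _) h eps) as [N hN].
  exists N. intros n hn. specialize (hN n hn).
  rewrite Rminus_0_r, Rabs_pos_eq by apply Cmod_ge_0. exact hN.
Qed.

Lemma Clim_scal (u : nat -> C) L c : u --> L -> (fun n => c * u n) --> c * L.
Proof. intros h. exact (filterlim_comp _ _ _ _ _ _ _ _ h (filterlim_scal_r c L)). Qed.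

Lemma Clim_unique (u : nat -> C) L1 L2 : u --> L1 -> u --> L2 -> L1 = L2.
Proof. exact (filterlim_locally_unique u L1 L2). Qed.

(* [qpinf a q] is by definition [Clim_seq (qpoch a q)]. *)
Definition Clim_seq (u : nat -> C) : C :=
  (real (Lim_seq (fun n => Re (u n))), real (Lim_seq (fun n => Im (u n)))).

Lemma Clim_seq_correct (u : nat -> C) L : u --> L -> Clim_seq u = L.
Proof.
  intros h. apply Cmod_of_Clim in h.
  assert (hRe : is_lim_seq (fun n => Re (u n)) (Re L)).
  { apply (is_lim_seq_of_Rabs_le _ _ _ (fun n => re_le_Cmod (u n - L)) h). }
  assert (hIm : is_lim_seq (fun n => Im (u n)) (Im L)).
  { apply (is_lim_seq_of_Rabs_le _ _ _ (fun n => im_le_Cmod (u n - L)) h). }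
  unfold Clim_seq. rewrite (is_lim_seq_unique _ _ hRe), (is_lim_seq_unique _ _ hIm).
  destruct L; reflexivity.
Qed.

Lemma is_series_C_ext (a b : nat -> C) (l : C) :
  (forall k, a k = b k) -> is_series a l -> is_series b l.
Proof. exact (is_series_ext a b l). Qed.

Lemma is_series_C_minus (a b : nat -> C) (la lb : C) :
  is_series a la -> is_series b lb -> is_series (fun k => a k - b k) (la - lb).
Proof. exact (is_series_minus a b la lb). Qed.

Lemma is_series_C_scal (c : C) (a : nat -> C) (l : C) :
  is_series a l -> is_series (fun k => c * a k) (c * l).
Proof. exact (is_series_scal c a l). Qed.

Lemma is_series_C_shift (a : nat -> C) (l : C) :
  is_series a l -> is_series (fun k => a (S k)) (l - a 0%nat).
Proof.
  intros h. replace l with (l - a 0%nat + a 0%nat) in h by ring.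
  exact (is_series_incr_1 a _ h).
Qed.

Lemma is_series_C_unique (a : nat -> C) (l1 l2 : C) : is_series a l1 -> is_series a l2 -> l1 = l2.
Proof. exact (Clim_unique (sum_n a) l1 l2). Qed.

Lemma Cmod_series_le (c : nat -> C) (l : C) (b : nat -> R) (B : R) :
  is_series c l -> (forall k, (Cmod (c k) <= b k)%R) -> is_series b B -> (Cmod l <= B)%R.
Proof.
  intros hc hcb hb.
  assert (partial_le : forall N, (Cmod (Csum c N) <= B)%R).
  { intros N. eapply Rle_trans.
    - exact (norm_sum_n_m c 0 N).
    - eapply Rle_trans; [apply (sum_n_m_le _ b), hcb|].
      apply (is_lim_seq_incr_compare (sum_n b)); [exact hb|].
      intros n. rewrite sum_Sn. change (sum_n b n <= sum_n b n + b (S n))%R.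
      pose proof (Cmod_ge_0 (c (S n))). pose proof (hcb (S n)). lra. }
  apply Cmod_of_Clim in hc.
  assert (tri : forall N, (Cmod l <= Cmod (Csum c N - l) + B)%R).
  { intros N. specialize (partial_le N). pose proof (Cmod_triangle (l - Csum c N) (Csum c N)).
    replace (l - Csum c N + Csum c N) with l in H by ring.
    rewrite Cmod_sub_comm in H. lra. }
  assert (lim_le := is_lim_seq_le _ _ (Cmod l) (0 + B)%R tri (is_lim_seq_const _)
                      (is_lim_seq_plus' _ _ _ _ hc (is_lim_seq_const B))).
  simpl in lim_le. lra.
Qed.

Lemma is_series_C_finite (a : nat -> C) n :
  (forall k, (n < k)%nat -> a k = 0) -> is_series a (Csum a n).
Proof.
  intros ha. apply (filterlim_ext_loc (fun _ => Csum a n)); [|apply filterlim_const].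
  exists n. intros N hN. induction hN as [|N hN IH]; [reflexivity|].
  rewrite IH. change (Csum a N = Csum a (S N)). rewrite Csum_S, ha by lia. ring.
Qed.

Lemma Cmod_qpoch_le a q m : (Cmod q < 1)%R ->
  (Cmod (qpoch a q m) <= exp (Cmod a / (1 - Cmod q)))%R.
Proof.
  intros hq. pose proof (Cmod_ge_0 q). pose proof (Cmod_ge_0 a).
  (* [1 + |a| |q|^j <= exp (|a| |q|^j)] and the geometric series bounds the exponents. *)
  assert (partial : (Cmod (qpoch a q m) <= exp (Cmod a * (1 - Cmod q ^ m) / (1 - Cmod q)))%R).
  { induction m as [|m IH].
    - rewrite qpoch_O, Cmod_1, pow_O, Rminus_diag, Rmult_0_r, Rdiv_0_l, exp_0. lra.
    - replace (Cmod a * (1 - Cmod q ^ S m) / (1 - Cmod q))%R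
        with (Cmod a * (1 - Cmod q ^ m) / (1 - Cmod q) + Cmod a * Cmod q ^ m)%R
        by (simpl; field; lra).
      rewrite qpoch_S, Cmod_mult, exp_plus.
      apply Rmult_le_compat; try apply Cmod_ge_0; [exact IH|].
      eapply Rle_trans; [apply Cmod_one_minus_le|].
      rewrite Cmod_mult, Cmod_pow_n. apply exp_ineq1_le. }
  eapply Rle_trans; [exact partial|].
  assert (exponents : (Cmod a * (1 - Cmod q ^ m) / (1 - Cmod q) <= Cmod a / (1 - Cmod q))%R).
  { assert (0 <= Cmod q ^ m)%R by (apply pow_le; lra).
    apply Rmult_le_compat_r; [apply Rlt_le, Rinv_0_lt_compat; lra | nra]. }
  destruct (Rle_lt_or_eq_dec _ _ exponents) as [lt | ->]; [left; now apply exp_increasing | lra].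
Qed.

Lemma qpoch_cvg a q : (Cmod q < 1)%R -> exists L, qpoch a q --> L.
Proof.
  intros hq. pose proof (Cmod_ge_0 q). pose proof (Cmod_ge_0 a).
  set (M := exp (Cmod a / (1 - Cmod q))).
  set (d k := qpoch a q (S k) - qpoch a q k).
  assert (hd : forall k, (norm (d k : C_NormedModule) <= M * Cmod a * Cmod q ^ k)%R).
  { intros k. change (Cmod (d k) <= M * Cmod a * Cmod q ^ k)%R. unfold d.
    rewrite qpoch_S.
    replace (qpoch a q k * (1 - a * pow_n q k) - qpoch a q k)
      with (- (qpoch a q k * a * pow_n q k)) by ring.
    rewrite Cmod_opp, !Cmod_mult, Cmod_pow_n.
    assert (0 <= Cmod q ^ k)%R by (apply pow_le; lra).
    apply Rmult_le_compat_r; [assumption|]. apply Rmult_le_compat_r; [assumption|].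
    now apply Cmod_qpoch_le. }
  destruct (@ex_series_le C_AbsRing C_CompleteNormedModule d _ hd) as [l hl].
  { apply (@ex_series_scal_l R_AbsRing R_NormedModule (M * Cmod a)%R (fun k => Cmod q ^ k)%R).
    apply ex_series_geom. rewrite Rabs_pos_eq; assumption. }
  exists (l + 1). apply filterlim_S.
  apply Cmod_of_Clim in hl.
  apply (Clim_of_Cmod_le _ _ (fun m => Cmod (sum_n d m - l))); [|exact hl].
  intros m. apply Req_le.
  change (Cmod (qpoch a q (S m) - (l + 1)) = Cmod (Csum d m - l)).
  unfold d. rewrite Csum_telescope, qpoch_O. f_equal. ring.
Qed.

Lemma qpinf_cvg a q : (Cmod q < 1)%R -> qpoch a q --> qpinf a q.
Proof.
  intros hq. destruct (qpoch_cvg a q hq) as [L hL].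
  change (qpinf a q) with (Clim_seq (qpoch a q)). now rewrite (Clim_seq_correct _ _ hL).
Qed.

Lemma qpinf_shift a q : (Cmod q < 1)%R -> qpinf a q = (1 - a) * qpinf (a * q) q.
Proof.
  intros hq. apply (Clim_unique (qpoch a q)); [now apply qpinf_cvg|].
  apply filterlim_S, (filterlim_ext (fun m => (1 - a) * qpoch (a * q) q m)).
  - intros m. now rewrite qpoch_shift.
  - now apply Clim_scal, qpinf_cvg.
Qed.

Lemma qpinf_0l q : qpinf 0 q = 1.
Proof.
  change (qpinf 0 q) with (Clim_seq (qpoch 0 q)). apply Clim_seq_correct.
  apply (filterlim_ext (fun _ => RtoC 1)); [intros m; now rewrite qpoch_0l | apply filterlim_const].
Qed.

(** * Euler's identity *)

Lemma Cmod_one_minus_pow_n_cvg q : (Cmod q < 1)%R ->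
  is_lim_seq (fun n => Cmod (1 - q * pow_n q n)) 1%R.
Proof.
  intros hq. apply (is_lim_seq_of_Rabs_le _ (fun n => Cmod q ^ S n)%R).
  - intros n. rewrite <- Cmod_1 at 2. eapply Rle_trans; [apply Rabs_Cmod_sub_le|].
    rewrite <- Cmod_pow_n, pow_n_S, <- Cmod_opp. right. f_equal. ring.
  - apply (is_lim_seq_incr_1 (fun n => Cmod q ^ n)%R), is_lim_seq_geom.
    rewrite Rabs_pos_eq by apply Cmod_ge_0. exact hq.
Qed.

Lemma ex_series_pow_div_qpoch q rho : (Cmod q < 1)%R -> (0 < rho < 1)%R ->
  ex_series (fun k => rho ^ k / Cmod (qpoch q q k))%R.
Proof.
  intros hq hrho.
  assert (hpos : forall k, (0 < rho ^ k / Cmod (qpoch q q k))%R).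
  { intros k. apply Rdiv_lt_0_compat; [apply pow_lt; lra|].
    now apply Cmod_gt_0, qpoch_qq_neq_0. }
  apply (ex_series_ext (fun k => Rabs (rho ^ k / Cmod (qpoch q q k)))%R).
  { intros k. apply Rabs_pos_eq, Rlt_le, hpos. }
  apply (ex_series_DAlembert _ rho); [lra | intros n; apply Rgt_not_eq, hpos |].
  apply (is_lim_seq_ext (fun n => rho * / Cmod (1 - q * pow_n q n))%R).
  - intros n. pose proof (hpos (S n)). pose proof (hpos n).
    pose proof (proj1 (Cmod_gt_0 _) (qpoch_qq_neq_0 q n hq)).
    pose proof (proj1 (Cmod_gt_0 _) (one_minus_pow_n_S_neq_0 q n hq)).
    rewrite Rabs_pos_eq by (apply Rlt_le, Rdiv_lt_0_compat; assumption).
    rewrite qpoch_S, Cmod_mult, <- tech_pow_Rmult. field.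
    repeat split; apply Rgt_not_eq; try assumption. now apply pow_lt.
  - replace (Finite rho) with (Rbar_mult rho (Rbar_inv 1%R)) by (simpl; f_equal; field).
    apply is_lim_seq_scal_l, is_lim_seq_inv; [now apply Cmod_one_minus_pow_n_cvg |].
    intros e; injection e; lra.
Qed.

Definition qexp q z : C := Clim_seq (Csum (fun k => pow_n z k / qpoch q q k)).

Lemma qexp_series q z : (Cmod q < 1)%R -> (Cmod z < 1)%R ->
  is_series (fun k => pow_n z k / qpoch q q k) (qexp q z).
Proof.
  intros hq hz. pose proof (Cmod_ge_0 z).
  assert (hex : ex_series (fun k => pow_n z k / qpoch q q k : C_NormedModule)).
  { apply (@ex_series_le C_AbsRing C_CompleteNormedModule _
             (fun k => ((1 + Cmod z) / 2) ^ k / Cmod (qpoch q q k))%R).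
    - intros k. change (Cmod (pow_n z k / qpoch q q k)
                        <= ((1 + Cmod z) / 2) ^ k / Cmod (qpoch q q k))%R.
      rewrite Cmod_div, Cmod_pow_n by now apply qpoch_qq_neq_0.
      apply Rmult_le_compat_r.
      + apply Rlt_le, Rinv_0_lt_compat, Cmod_gt_0. now apply qpoch_qq_neq_0.
      + apply pow_incr. lra.
    - apply ex_series_pow_div_qpoch; [exact hq | lra]. }
  destruct hex as [l hl]. replace (qexp q z) with l; [exact hl|].
  symmetry. exact (Clim_seq_correct _ _ hl).
Qed.

Lemma qexp_mult_q q z : (Cmod q < 1)%R -> (Cmod z < 1)%R -> qexp q (z * q) = (1 - z) * qexp q z.
Proof.
  intros hq hz.
  assert (hzq : (Cmod (z * q) < 1)%R) by now apply Cmod_mult_lt_1.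
  pose proof (is_series_C_shift _ _ (is_series_C_minus _ _ _ _ (qexp_series q z hq hz)
                                       (qexp_series q (z * q) hq hzq))) as hdiff.
  assert (hterm : forall k, pow_n z (S k) / qpoch q q (S k) - pow_n (z * q) (S k) / qpoch q q (S k)
                            = z * (pow_n z k / qpoch q q k)).
  { intros k. rewrite pow_n_mult, !pow_n_S, qpoch_S.
    pose proof (qpoch_qq_neq_0 q k hq). pose proof (one_minus_pow_n_S_neq_0 q k hq).
    field. split; assumption. }
  apply (is_series_C_ext _ _ _ hterm) in hdiff.
  pose proof (is_series_C_unique _ _ _ hdiff (is_series_C_scal z _ _ (qexp_series q z hq hz))) as e.
  cbv beta in e. rewrite !pow_n_O, qpoch_O in e.
  transitivity (qexp q z - (qexp q z - qexp q (z * q) - (1 / 1 - 1 / 1))); [field|].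
  rewrite e. ring.
Qed.

Lemma qexp_mult_pow_n q z m : (Cmod q < 1)%R -> (Cmod z < 1)%R ->
  qexp q (z * pow_n q m) = qpoch z q m * qexp q z.
Proof.
  intros hq hz. induction m as [|m IH].
  - rewrite pow_n_O, qpoch_O, Cmult_1_r. ring.
  - replace (z * pow_n q (S m)) with (z * pow_n q m * q) by (rewrite pow_n_S; ring).
    rewrite qexp_mult_q, IH, qpoch_S by (auto using Cmod_mult_pow_n_lt_1). ring.
Qed.

Lemma Cmod_qexp_sub_1_le q r : (Cmod q < 1)%R -> (0 <= r < 1)%R ->
  exists B, forall w, (Cmod w <= r)%R -> (Cmod (qexp q w - 1) <= Cmod w * B)%R.
Proof.
  intros hq hr. set (rho := ((1 + r) / 2)%R).
  assert (hrho : (0 < rho < 1)%R) by (unfold rho; lra).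
  set (b k := (rho ^ k / Cmod (qpoch q q (S k)))%R).
  assert (hb : ex_series b).
  { apply (ex_series_ext (fun k => / rho * (rho ^ S k / Cmod (qpoch q q (S k))))%R).
    - intros k. unfold b.
      assert (e : (/ rho * (rho ^ S k / Cmod (qpoch q q (S k)))
                   = rho ^ k / Cmod (qpoch q q (S k)))%R).
      { rewrite <- tech_pow_Rmult. field.
        split; [apply Rgt_not_eq, Cmod_gt_0, qpoch_qq_neq_0, hq | lra]. }
      exact e.
    - apply (@ex_series_scal_l R_AbsRing R_NormedModule).
      apply (ex_series_incr_1 (fun k => rho ^ k / Cmod (qpoch q q k))%R).
      now apply ex_series_pow_div_qpoch. }
  exists (Series b). intros w hw.
  assert (hw1 : (Cmod w < 1)%R) by lra.
  set (c k := pow_n w k / qpoch q q (S k)).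
  assert (hc : is_series (fun k => w * c k) (qexp q w - 1)).
  { pose proof (is_series_C_shift _ _ (qexp_series q w hq hw1)) as h.
    cbv beta in h. rewrite pow_n_O, qpoch_O in h. replace (1 / 1) with (RtoC 1) in h by field.
    refine (is_series_C_ext _ _ _ _ h). intros k. unfold c. rewrite pow_n_S. unfold Cdiv. ring. }
  assert (hcb : forall k, (Cmod (c k) <= b k)%R).
  { intros k. unfold c, b. rewrite Cmod_div, Cmod_pow_n by now apply qpoch_qq_neq_0.
    apply Rmult_le_compat_r.
    - apply Rlt_le, Rinv_0_lt_compat, Cmod_gt_0. now apply qpoch_qq_neq_0.
    - apply pow_incr. pose proof (Cmod_ge_0 w). unfold rho. lra. }
  destruct (@ex_series_le C_AbsRing C_CompleteNormedModule c b hcb hb) as [l hl].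
  rewrite (is_series_C_unique _ _ _ hc (is_series_C_scal w c l hl)), Cmod_mult.
  apply Rmult_le_compat_l; [apply Cmod_ge_0|].
  exact (Cmod_series_le c l b _ hl hcb (Series_correct _ hb)).
Qed.

Lemma qpinf_mult_qexp q z : (Cmod q < 1)%R -> (Cmod z < 1)%R -> qpinf z q * qexp q z = 1.
Proof.
  intros hq hz. pose proof (Cmod_ge_0 z). pose proof (Cmod_ge_0 q).
  destruct (Cmod_qexp_sub_1_le q (Cmod z) hq (conj H hz)) as [B hB].
  (* [e_q(z q^m) = (z;q)_m e_q(z)] tends to [(z;q)_oo e_q(z)], and to [1] since [z q^m -> 0]. *)
  apply (Clim_unique (fun m => qexp q (z * pow_n q m))).
  - apply (filterlim_ext (fun m => qexp q z * qpoch z q m)).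
    + intros m. rewrite qexp_mult_pow_n by assumption. ring.
    + rewrite Cmult_comm. now apply Clim_scal, qpinf_cvg.
  - apply (Clim_of_Cmod_le _ _ (fun m => Cmod z * B * Cmod q ^ m)%R).
    + intros m. rewrite <- (Cmod_pow_n q m).
      eapply Rle_trans; [apply hB|]; rewrite Cmod_mult.
      * pose proof (Cmod_pow_n_le_1 q m hq). nra.
      * right. ring.
    + replace (Finite 0) with (Rbar_mult (Cmod z * B)%R 0%R) by (simpl; f_equal; ring).
      apply is_lim_seq_scal_l, is_lim_seq_geom. now rewrite Rabs_pos_eq.
Qed.

Lemma qpinf_neq_0 q z : (Cmod q < 1)%R -> (Cmod z < 1)%R -> qpinf z q <> 0.
Proof.
  intros hq hz e. pose proof (qpinf_mult_qexp q z hq hz) as h.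
  rewrite e, Cmult_0_l in h. injection h. lra.
Qed.

Lemma euler q z : (Cmod q < 1)%R -> (Cmod z < 1)%R ->
  is_series (fun k => pow_n z k / qpoch q q k) (/ qpinf z q).
Proof.
  intros hq hz. replace (/ qpinf z q) with (qexp q z); [now apply qexp_series|].
  pose proof (qpinf_mult_qexp q z hq hz). pose proof (qpinf_neq_0 q z hq hz).
  transitivity (/ qpinf z q * (qpinf z q * qexp q z)); [field; assumption | rewrite H; ring].
Qed.

(** * The q-shift operator *)

Lemma Dxy_pow_O (q : C) (f : C -> C -> C) (u v : C) : Dxy_pow q 0 f u v = f u v.
Proof. reflexivity. Qed.

Lemma Dxy_pow_S (q : C) k (f : C -> C -> C) (u v : C) : Dxy_pow q (S k) f u v
  = (Dxy_pow q k f u (/ q * v) - Dxy_pow q k f (q * u) v) / (u - / q * v).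
Proof. reflexivity. Qed.

Lemma Dxy_pow_sub_div (q : C) k (f g : C -> C -> C) (c u v : C) :
  Dxy_pow q k (fun u v => (f u v - g u v) / c) u v = (Dxy_pow q k f u v - Dxy_pow q k g u v) / c.
Proof.
  revert u v; induction k as [|k IH]; intros u v; [reflexivity|].
  rewrite !Dxy_pow_S, !IH. unfold Cdiv. ring.
Qed.

Definition qgrid (q x y u v : C) : Prop :=
  exists a b : nat, u = pow_n q a * x /\ v = / pow_n q b * y.

Lemma qgrid_refl (q x y : C) : qgrid q x y x y.
Proof. exists 0%nat, 0%nat. rewrite pow_n_O. split; field. Qed.

Lemma qgrid_mult_q (q x y u v : C) : qgrid q x y u v -> qgrid q x y (q * u) v.
Proof. intros [a [b [-> ->]]]. exists (S a), b. rewrite pow_n_S. split; ring. Qed.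

Lemma qgrid_div_q (q x y u v : C) : q <> 0 -> qgrid q x y u v -> qgrid q x y u (/ q * v).
Proof.
  intros hq0 [a [b [-> ->]]]. exists a, (S b). rewrite pow_n_S.
  pose proof (pow_n_neq_0 q b hq0). split; [reflexivity | field; split; assumption].
Qed.

Lemma Dxy_pow_qgrid_ext (q x y : C) (f g : C -> C -> C) : q <> 0 ->
  (forall u v, qgrid q x y u v -> f u v = g u v) ->
  forall k u v, qgrid q x y u v -> Dxy_pow q k f u v = Dxy_pow q k g u v.
Proof.
  intros hq0 hfg k. induction k as [|k IH]; intros u v huv; [now apply hfg|].
  rewrite !Dxy_pow_S, !IH; auto using qgrid_mult_q, qgrid_div_q.
Qed.

Lemma Dxy_pow_qgrid_eigen (q x y : C) (f : C -> C -> C) (t : C) : q <> 0 ->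
  (forall u v, qgrid q x y u v -> (f u (/ q * v) - f (q * u) v) / (u - / q * v) = t * f u v) ->
  forall k u v, qgrid q x y u v -> Dxy_pow q k f u v = pow_n t k * f u v.
Proof.
  intros hq0 hf k. induction k as [|k IH]; intros u v huv.
  - rewrite Dxy_pow_O, pow_n_O. ring.
  - rewrite Dxy_pow_S, !IH, pow_n_S by auto using qgrid_mult_q, qgrid_div_q.
    transitivity (pow_n t k * ((f u (/ q * v) - f (q * u) v) / (u - / q * v)));
      [unfold Cdiv; ring | rewrite hf by exact huv; ring].
Qed.

Lemma Dxy_Pn (q u v : C) m : q <> 0 -> u - / q * v <> 0 ->
  (Pn q u (/ q * v) m - Pn q (q * u) v m) / (u - / q * v) = (1 - pow_n q m) * Pn q u v (m - 1).
Proof.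
  intros hq0 hden. destruct m as [|m].
  - rewrite !Pn_O, pow_n_O. unfold Cdiv. ring.
  - replace (S m - 1)%nat with m by lia.
    assert (e1 : Pn q u (/ q * v) (S m) = (u - / q * v) * Pn q u v m).
    { rewrite Pn_shift. do 2 f_equal. field. exact hq0. }
    assert (e2 : Pn q (q * u) v (S m) = pow_n q (S m) * ((u - / q * v) * Pn q u v m)).
    { rewrite <- e1, <- Pn_scale. do 2 f_equal. field. exact hq0. }
    rewrite e1, e2. unfold Cdiv.
    transitivity ((1 - pow_n q (S m)) * Pn q u v m * ((u - / q * v) * / (u - / q * v)));
      [ring | rewrite Cinv_r by exact hden; ring].
Qed.

Fixpoint qfalling (q : C) (n k : nat) : C :=
  match k with
  | O => 1
  | S j => qfalling q n j * (1 - pow_n q (n - j))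
  end.

Lemma qfalling_gt q n k : (n < k)%nat -> qfalling q n k = 0.
Proof.
  induction k as [|k IH]; intros hk; [lia|]. simpl.
  destruct (Nat.eq_dec n k) as [<-|ne].
  - rewrite Nat.sub_diag, pow_n_O. ring.
  - rewrite IH by lia. ring.
Qed.

Lemma qfalling_le q n k : (k <= n)%nat -> qfalling q n k * qpoch q q (n - k) = qpoch q q n.
Proof.
  induction k as [|k IH]; intros hk; simpl.
  - rewrite Nat.sub_0_r. ring.
  - rewrite <- IH by lia. replace (n - k)%nat with (S (n - S k)) by lia.
    rewrite qpoch_S, <- pow_n_S. ring.
Qed.

Definition is_Eshift (q : C) (f : C -> C -> C) (x y l : C) : Prop :=
  is_series (fun k => Dxy_pow q k f x y / qpoch q q k) l.

Lemma is_Eshift_qgrid_ext (q : C) (f g : C -> C -> C) (x y l : C) : q <> 0 ->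
  (forall u v, qgrid q x y u v -> f u v = g u v) -> is_Eshift q f x y l -> is_Eshift q g x y l.
Proof.
  intros hq0 hfg. apply is_series_C_ext. intros k.
  now rewrite (Dxy_pow_qgrid_ext q x y f g hq0 hfg k x y (qgrid_refl q x y)).
Qed.

Lemma is_Eshift_sub_div (q : C) (f g : C -> C -> C) (x y c lf lg : C) :
  is_Eshift q f x y lf -> is_Eshift q g x y lg ->
  is_Eshift q (fun u v => (f u v - g u v) / c) x y (/ c * (lf - lg)).
Proof.
  intros hf hg. unfold is_Eshift.
  apply (is_series_C_ext (fun k => / c * (Dxy_pow q k f x y / qpoch q q k
                                         - Dxy_pow q k g x y / qpoch q q k))).
  - intros k. rewrite Dxy_pow_sub_div. unfold Cdiv. ring.
  - now apply is_series_C_scal, is_series_C_minus.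
Qed.

Section Eshift.

Variables q x y : C.
Hypothesis hq : (Cmod q < 1)%R.
Hypothesis hq0 : q <> 0.
Hypothesis hxy : forall m : nat, y <> pow_n q (S m) * x.

Lemma qgrid_den_neq_0 (u v : C) : qgrid q x y u v -> u - / q * v <> 0.
Proof.
  intros [a [b [-> ->]]] e. apply (hxy (a + b)).
  pose proof (pow_n_neq_0 q b hq0).
  assert (e' : / q * (/ pow_n q b * y) = pow_n q a * x)
    by (apply Ceq_minus; transitivity (- (pow_n q a * x - / q * (/ pow_n q b * y)));
        [ring | rewrite e; ring]).
  transitivity (q * pow_n q b * (/ q * (/ pow_n q b * y))); [field; split; assumption|].
  rewrite e', pow_n_S, pow_n_add. ring.
Qed.

Lemma qgrid_Cmod_lt_1 (u v t : C) :
  (Cmod (x * t) < 1)%R -> qgrid q x y u v -> (Cmod (u * t) < 1)%R.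
Proof.
  intros hxt [a [b [-> _]]]. replace (pow_n q a * x * t) with (x * t * pow_n q a) by ring.
  now apply Cmod_mult_pow_n_lt_1.
Qed.

Definition Fn (n : nat) (t : C) : C -> C -> C :=
  fun u v => qpinf (v * t) q / qpinf (u * t) q * (Pn q u v n / qpoch (v * t) q n).

Definition Rn (n : nat) (t : C) : C :=
  qpinf (y * t) q / (qpinf t q * qpinf (x * t) q) * rhs_sum q x y t n.

Lemma Dxy_F0 (t u v : C) : (Cmod (x * t) < 1)%R -> qgrid q x y u v ->
  (Fn 0 t u (/ q * v) - Fn 0 t (q * u) v) / (u - / q * v) = t * Fn 0 t u v.
Proof.
  intros hxt huv. unfold Fn. rewrite !Pn_O, !qpoch_O.
  pose proof (qgrid_den_neq_0 u v huv) as hden.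
  pose proof (qgrid_Cmod_lt_1 u v t hxt huv) as hut.
  assert (hutq : (Cmod (u * t * q) < 1)%R) by now apply Cmod_mult_lt_1.
  rewrite (qpinf_shift (/ q * v * t) q hq), (qpinf_shift (u * t) q hq).
  replace (/ q * v * t * q) with (v * t) by (field; exact hq0).
  replace (q * u * t) with (u * t * q) by ring.
  pose proof (qpinf_neq_0 q _ hq hutq). pose proof (one_minus_neq_0 _ hut).
  assert (u * q - v <> 0).
  { intros e. apply hden. replace (u - / q * v) with (/ q * (u * q - v)) by (field; exact hq0).
    rewrite e. ring. }
  field. repeat split; assumption.
Qed.

Lemma Eshift_F0 (t : C) : (Cmod t < 1)%R -> (Cmod (x * t) < 1)%R ->
  is_Eshift q (Fn 0 t) x y (Rn 0 t).
Proof.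
  intros ht hxt.
  apply (is_series_C_ext (fun k => Fn 0 t x y * (pow_n t k / qpoch q q k))).
  - intros k. rewrite (Dxy_pow_qgrid_eigen q x y (Fn 0 t) t hq0) by
      (auto using qgrid_refl; intros u v huv; now apply Dxy_F0).
    unfold Cdiv. ring.
  - replace (Rn 0 t) with (Fn 0 t x y * / qpinf t q); [now apply is_series_C_scal, euler|].
    pose proof (qpinf_neq_0 q t hq ht). pose proof (qpinf_neq_0 q (x * t) hq hxt).
    unfold Fn, Rn, rhs_sum. rewrite Csum_O, Pn_O, !qpoch_O, qbinom_n0, pow_n_O by exact hq.
    field. split; assumption.
Qed.

Lemma Fn_S n (t u v : C) : t <> 0 -> (Cmod (x * t) < 1)%R ->
  (forall j, qpoch (/ pow_n q j * y * t) q (S n) <> 0) -> qgrid q x y u v ->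
  Fn (S n) t u v = (Fn n t u v - Fn n (t * q) u v) / t.
Proof.
  intros ht0 hxt hyt huv.
  assert (hvt : qpoch (v * t) q (S n) <> 0) by (destruct huv as [a [b [_ ->]]]; apply hyt).
  destruct (qpoch_factors_neq_0 _ _ _ n hvt (le_n n)) as [hvtn hvtn1].
  destruct (qpoch_factors_neq_0 _ _ _ 0 hvt (Nat.le_0_l n)) as [_ hvt1].
  rewrite pow_n_O, Cmult_1_r in hvt1.
  pose proof (qgrid_Cmod_lt_1 u v t hxt huv) as hut.
  assert (hutq : (Cmod (u * t * q) < 1)%R) by now apply Cmod_mult_lt_1.
  pose proof (qpinf_neq_0 q _ hq hutq). pose proof (one_minus_neq_0 _ hut).
  unfold Fn.
  replace (v * (t * q)) with (v * t * q) by ring. replace (u * (t * q)) with (u * t * q) by ring.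
  rewrite (qpinf_shift (v * t) q hq), (qpinf_shift (u * t) q hq), qpoch_mult_q, qpoch_S, Pn_S
    by exact hvt1.
  field. repeat split; assumption.
Qed.

Lemma Rn_S n (t : C) : t <> 0 -> (Cmod t < 1)%R -> (Cmod (x * t) < 1)%R ->
  qpoch (y * t) q (S n) <> 0 -> Rn (S n) t = / t * (Rn n t - Rn n (t * q)).
Proof.
  intros ht0 ht hxt hyt.
  destruct (qpoch_factors_neq_0 _ _ _ 0 hyt (Nat.le_0_l n)) as [_ hyt1].
  rewrite pow_n_O, Cmult_1_r in hyt1.
  pose proof (one_minus_neq_0 _ ht). pose proof (one_minus_neq_0 _ hxt).
  pose proof (qpinf_neq_0 q _ hq (Cmod_mult_lt_1 _ _ ht hq)).
  pose proof (qpinf_neq_0 q _ hq (Cmod_mult_lt_1 _ _ hxt hq)).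
  assert (hrec := rhs_sum_S q x y t n hq (one_minus_neq_0 _ hxt) hyt).
  unfold Rn.
  replace (y * (t * q)) with (y * t * q) by ring. replace (x * (t * q)) with (x * t * q) by ring.
  rewrite (qpinf_shift (y * t) q hq), (qpinf_shift t q hq), (qpinf_shift (x * t) q hq).
  replace (rhs_sum q x y (t * q) n)
    with ((rhs_sum q x y t n - t * rhs_sum q x y t (S n)) * (1 - y * t) / ((1 - t) * (1 - x * t)))
    by (rewrite hrec; field; repeat split; assumption).
  field. repeat split; assumption.
Qed.

Lemma Eshift_Fn n : forall t : C, t <> 0 -> (Cmod t < 1)%R -> (Cmod (x * t) < 1)%R ->
  (forall j, qpoch (/ pow_n q j * y * t) q n <> 0) -> is_Eshift q (Fn n t) x y (Rn n t).
Proof.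
  induction n as [|n IH]; intros t ht0 ht hxt hyt; [now apply Eshift_F0|].
  assert (htq : (Cmod (t * q) < 1)%R) by now apply Cmod_mult_lt_1.
  assert (hxtq : (Cmod (x * (t * q)) < 1)%R) by (rewrite Cmult_assoc; now apply Cmod_mult_lt_1).
  assert (hyt0 : qpoch (y * t) q (S n) <> 0).
  { specialize (hyt 0%nat). rewrite pow_n_O in hyt.
    now replace (y * t) with (/ 1 * y * t) by field. }
  rewrite Rn_S by assumption.
  apply (is_Eshift_qgrid_ext q (fun u v => (Fn n t u v - Fn n (t * q) u v) / t)); [exact hq0| |].
  { intros u v huv. symmetry. now apply Fn_S. }
  apply is_Eshift_sub_div; apply IH; try assumption.
  - intros j e. apply (hyt j). rewrite qpoch_S, e. ring.
  - now apply Cmult_neq_0.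
  - intros j e. apply (hyt j). rewrite qpoch_shift.
    replace (/ pow_n q j * y * t * q) with (/ pow_n q j * y * (t * q)) by ring. rewrite e. ring.
Qed.

Lemma Dxy_pow_Pn n k (u v : C) : qgrid q x y u v ->
  Dxy_pow q k (fun u v => Pn q u v n) u v = qfalling q n k * Pn q u v (n - k).
Proof.
  revert u v; induction k as [|k IH]; intros u v huv.
  - rewrite Dxy_pow_O, Nat.sub_0_r. simpl. ring.
  - rewrite Dxy_pow_S, !IH by auto using qgrid_mult_q, qgrid_div_q.
    transitivity (qfalling q n k * ((Pn q u (/ q * v) (n - k) - Pn q (q * u) v (n - k))
                                    / (u - / q * v))); [unfold Cdiv; ring|].
    rewrite Dxy_Pn by auto using qgrid_den_neq_0. simpl.
    replace (n - k - 1)%nat with (n - S k)%nat by lia. ring.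
Qed.

Lemma Eshift_Fn_0 n : is_Eshift q (Fn n 0) x y (Rn n 0).
Proof.
  assert (hF : forall u v, qgrid q x y u v -> Pn q u v n = Fn n 0 u v).
  { intros u v _. unfold Fn. rewrite !Cmult_0_r, qpinf_0l, qpoch_0l. field. }
  apply (is_Eshift_qgrid_ext q _ _ _ _ _ hq0 hF).
  apply (is_series_C_ext (fun k => qfalling q n k * Pn q x y (n - k) / qpoch q q k)).
  { intros k. now rewrite Dxy_pow_Pn by apply qgrid_refl. }
  replace (Rn n 0) with (Csum (fun k => qfalling q n k * Pn q x y (n - k) / qpoch q q k) n).
  { apply is_series_C_finite. intros k hk. rewrite qfalling_gt by exact hk. unfold Cdiv. ring. }
  transitivity (qbinom_Pn_sum q x y n).
  { apply Csum_ext_loc. intros k hk. unfold qbinom. rewrite <- (qfalling_le q n k hk).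
    pose proof (qpoch_qq_neq_0 q k hq). pose proof (qpoch_qq_neq_0 q (n - k) hq).
    field. split; assumption. }
  rewrite qbinom_Pn_sum_eq by assumption.
  unfold Rn, rhs_sum. rewrite !Cmult_0_r, qpinf_0l.
  unfold qbinom_qpoch_sum.
  transitivity (1 / (1 * 1) * Csum (fun k => qbinom q n k * qpoch y q k * pow_n x (n - k)) n);
    [field | f_equal].
  apply Csum_ext_loc. intros k _. rewrite !qpoch_0l. field.
Qed.

End Eshift.

Theorem lemma2p3 (q t x y : C) (n : nat)
  (hq : (Cmod q < 1)%R) (hq0 : q <> 0)
  (ht : (Cmod t < 1)%R) (hxt : (Cmod (x * t) < 1)%R)
  (hxy : forall m : nat, y <> pow_n q (S m) * x)
  (hyt : forall j : nat, qpoch (/ pow_n q j * y * t) q n <> 0) :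
  is_series
    (fun k : nat =>
       Dxy_pow q k
         (fun u v : C => qpinf (v * t) q / qpinf (u * t) q * (Pn q u v n / qpoch (v * t) q n))
         x y / qpoch q q k)
    (qpinf (y * t) q / (qpinf t q * qpinf (x * t) q) *
     sum_n (fun k : nat =>
              qbinom q n k * (qpoch y q k * qpoch (x * t) q k) / qpoch (y * t) q k
              * pow_n x (n - k)) n).
Proof.
  destruct (Ceq_dec t 0) as [-> | ht0].
  - exact (Eshift_Fn_0 q x y hq hq0 hxy n).
  - exact (Eshift_Fn q x y hq hq0 hxy n t ht0 ht hxt hyt).
Qed.
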